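(* Let $n\geq 3$ and let $L^B$ be a blow-up of the Boolean lattice $L\cong \mathbf{2}^n$. Then \[ \operatorname{sdim}_M\bigl(G^c(L^B)\bigr)=|Z^*(L^B)|-2^{n-1}+1 . \]
   Context: Blow-up: let $L\cong\mathbf{2}^n$ be the Boolean lattice (subsets of $\{1,\dots,n\}$). The blow-up $L^B$ is the lattice obtained by keeping $0$ and $1$ and replacing every element $x\in L\setminus\{0,1\}$ by a finite nonempty chain $C_x$ (of arbitrary finite length, chosen independently for each $x$), ordered as follows: within $C_x$ the chain order; for $a\in C_x$, $b\in C_y$ with $x\neq y$, $a\leq b$ iff $x\leq y$ in $L$; $0$ is below and $1$ above everything. For a bounded lattice $M$ with $0$, $Z^*(M)=\{a\in M\setminus\{0\}:\ a\wedge b=0 \text{ for some } b\neq 0\}$. The graph $G^c(M)$ (complement of the zero-divisor graph) has vertex set $Z^*(M)$, two distinct vertices $a,b$ being adjacent iff $a\wedge b\neq 0$. For a connected graph $G$, a vertex $w$ strongly resolves $u,v$ if some shortest $u$–$w$ path contains $v$ or some shortest $v$–$w$ path contains $u$; a set $W$ of vertices is a strong resolving set if every pair of distinct vertices is strongly resolved by some vertex of $W$; $\operatorname{sdim}_M(G)$ is the minimum cardinality of a strong resolving set. *)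

From mathcomp Require Import all_boot.
Set Implicit Arguments.
Unset Strict Implicit.
Unset Printing Implicit Defensive.

Section Graph.
Variables (V : finType) (Vs : {set V}) (adj : rel V).

Definition gwalk (u : V) (p : seq V) (w : V) : Prop :=
  [/\ path adj u p, last u p = w & all (fun x => x \in Vs) (u :: p)].

Definition gshortest (u : V) (p : seq V) (w : V) : Prop :=
  gwalk u p w /\ forall q, gwalk u q w -> size p <= size q.

Definition strongly_resolves (w u v : V) : Prop :=
  (exists p, gshortest u p w /\ v \in u :: p) \/
  (exists p, gshortest v p w /\ u \in v :: p).

Definition strong_resolving_set (W : {set V}) : Prop :=
  W \subset Vs /\
  forall u v, u \in Vs -> v \in Vs -> u != v ->
    exists2 w, w \in W & strongly_resolves w u v.

Definition is_sdim (N : nat) : Prop :=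
  (exists W, strong_resolving_set W /\ #|W| = N) /\
  (forall W, strong_resolving_set W -> N <= #|W|).
End Graph.

(* k x = length of the chain C_x replacing x (for x proper nonempty) *)
Definition kbound (n : nat) (k : {set 'I_n} -> nat) : nat :=
  \max_(x : {set 'I_n}) k x.

(* carrier: None = 0, Some None = 1, Some (Some (x, i)) = i-th element of C_x *)
Definition BElt (n : nat) (k : {set 'I_n} -> nat) : finType :=
  option (option ({set 'I_n} * 'I_(kbound k))).

Section BlowUp.
Variables (n : nat) (k : {set 'I_n} -> nat).
Local Notation E := (BElt k).

Definition bot : E := None.
Definition top : E := Some None.

(* elements actually belonging to L^B *)
Definition LB : {set E} :=
  [set a : E | match a with
               | Some (Some (x, i)) => [&& x != set0, x != setT & (i : nat) < k x]
               | _ => true end].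

Definition ble (a b : E) : bool :=
  match a, b with
  | None, _ => true
  | _, Some None => true
  | Some None, _ => false
  | Some (Some _), None => false
  | Some (Some (x, i)), Some (Some (y, j)) =>
      if x == y then (i <= j)%N else x \proper y
  end.

Definition meet0 (a b : E) : bool :=
  [forall c in LB, (ble c a && ble c b) ==> (c == bot)].

Definition Zstar : {set E} :=
  [set a in LB | (a != bot) && [exists b in LB, (b != bot) && meet0 a b]].

Definition Gc_adj : rel E := fun a b => (a != b) && ~~ meet0 a b.
End BlowUp.

(* In Z*(L^B) = L^B minus {0, 1}, two elements are adjacent in G^c iff the
   subsets of {1..n} indexing their chains meet, and for n >= 3 the graph has
   diameter 2.  If u, v lie in the same chain, or in chains indexed by disjoint
   sets, then v is at least as far from u as each of its neighbours, so a
   shortest path from u through v must end at v: only u or v can strongly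
   resolve the pair.  Hence the vertices missing from a strong resolving set
   index pairwise distinct, pairwise intersecting proper subsets, of which there
   are at most 2^(n-1) - 1.  Conversely, fix t and leave out only the least
   elements of the chains C_x with t in x <> 1: for x not below y pick
   i in x \ y; then y - x - {i} is a shortest path, and the least element of
   C_{i} strongly resolves the pair. *)

From mathcomp Require Import all_boot zify.
Set Implicit Arguments. Unset Strict Implicit. Unset Printing Implicit Defensive.

Section GraphFacts.
Variables (V : finType) (Vs : {set V}) (adj : rel V).
Local Notation walk := (gwalk Vs adj).
Local Notation shortest := (gshortest Vs adj).

Lemma gwalk_nil u : u \in Vs -> walk u [::] u.
Proof. by move=> uVs; split=> //=; rewrite uVs. Qed.

Lemma gwalk_cons u v p w : u \in Vs -> adj u v -> walk v p w -> walk u (v :: p) w.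
Proof. by move=> uVs uv [vp <- vpVs]; split=> //=; rewrite ?uv ?uVs. Qed.

Lemma gwalk_consP u v p w :
  walk u (v :: p) w <-> [/\ u \in Vs, adj u v & walk v p w].
Proof.
split=> [[/= /andP [uv vp] <- /andP [uVs vpVs]]|[uVs uv vpw]]; last exact: gwalk_cons.
by split=> //; split.
Qed.

Lemma gwalk_cat u p v q w : walk u p v -> walk v q w -> walk u (p ++ q) w.
Proof.
move=> [up <- upVs] [vq <- /= /andP [_ qVs]]; split.
- by rewrite cat_path up.
- by rewrite last_cat.
- by move: upVs => /= /andP [-> pVs]; rewrite all_cat pVs.
Qed.

Lemma gwalk_catl u p q w : walk u (p ++ q) w -> walk u p (last u p).
Proof.
move=> [/[!cat_path] /andP [up _] _ /= /andP [uVs]].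
by rewrite all_cat => /andP [pVs _]; split=> //=; rewrite uVs.
Qed.

Lemma gwalk_catr u p q w : walk u (p ++ q) w -> walk (last u p) q w.
Proof.
move=> [/[!cat_path] /andP [_ pq] /[!last_cat] pqw].
rewrite /= all_cat => /and3P [uVs pVs qVs]; split=> //=.
rewrite qVs andbT; have /allP : all (fun x => x \in Vs) (u :: p) by rewrite /= uVs.
by apply; apply: mem_last.
Qed.

Lemma gwalk_gshortest u p w : walk u p w -> exists q, shortest u q w.
Proof.
move=> upw.
pose walkb q := [&& path adj u q, last u q == w & all (fun x => x \in Vs) (u :: q)].
have walkP q : reflect (walk u q w) (walkb q).
  by apply: (iffP and3P) => -[uq /eqP uqw uqVs].
have exP : exists m, [exists t : m.-tuple V, walkb t].
  by exists (size p); apply/existsP; exists (in_tuple p); apply/walkP.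
case: (ex_minnP exP) => m /existsP [t /walkP utw] minm.
exists t; split=> // q /walkP uqw; rewrite size_tuple.
by apply: minm; apply/existsP; exists (in_tuple q).
Qed.

Lemma gshortest_last u p w : shortest u p w -> w \in u :: p.
Proof. by case=> -[_ <- _] _; apply: mem_last. Qed.

Lemma strongly_resolves_self u v p : walk v p u -> strongly_resolves Vs adj u u v.
Proof.
case/gwalk_gshortest=> q vqu; right; exists q; split=> //.
exact: gshortest_last vqu.
Qed.

Lemma strongly_resolves_sym w u v :
  strongly_resolves Vs adj w u v -> strongly_resolves Vs adj w v u.
Proof. by case; [right|left]. Qed.

Definition locally_farthest (u v : V) : Prop :=
  forall z q, z \in Vs -> adj v z -> walk u q v ->
    exists2 q', walk u q' z & size q' <= size q.

Lemma gshortest_locally_farthest u p w v :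
  shortest u p w -> v \in p -> locally_farthest u v -> w = v.
Proof.
move=> [upw minp] vp far; case/splitPr: vp upw minp => p1 [|z p2] upw minp.
  by case: upw; rewrite last_cat.
rewrite -cat_rcons in upw minp.
have up1v : walk u (rcons p1 v) v.
  by rewrite -{2}(last_rcons u p1 v); apply: gwalk_catl upw.
have /gwalk_consP [_ vz zp2w] := gwalk_catr upw; rewrite last_rcons in vz zp2w.
have zVs : z \in Vs by case: zp2w => _ _ /andP [].
have [q' uq'z le_q'] := far z _ zVs vz up1v.
have := minp _ (gwalk_cat uq'z zp2w).
by rewrite size_rcons in le_q'; rewrite !size_cat size_rcons /=; lia.
Qed.

Lemma strongly_resolves_locally_farthest w u v :
  u != v -> locally_farthest u v -> locally_farthest v u ->
  strongly_resolves Vs adj w u v -> w = u \/ w = v.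
Proof.
move=> uv far_uv far_vu [[p [upw vp]]|[p [vpw up]]].
- right; apply: gshortest_locally_farthest upw _ far_uv.
  by move: vp; rewrite inE eq_sym (negbTE uv).
- left; apply: gshortest_locally_farthest vpw _ far_vu.
  by move: up; rewrite inE (negbTE uv).
Qed.

Lemma gshortest_pair u c w :
  u \in Vs -> c \in Vs -> w \in Vs -> adj u c -> adj c w -> u != w -> ~~ adj u w ->
  shortest u [:: c; w] w.
Proof.
move=> uVs cVs wVs uc cw uw not_uw; split.
  by apply: gwalk_cons uVs uc (gwalk_cons cVs cw (gwalk_nil wVs)).
case=> [|d [|e q]] //= => [[_ /= uw']|/gwalk_consP [_ ud [_ /= dw _]]].
  by rewrite uw' eqxx in uw.
by rewrite -dw ud in not_uw.
Qed.

End GraphFacts.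

Section IntersectingFamilies.
Variable T : finType.

Lemma card_finset : #|{set T}| = 2 ^ #|T|.
Proof. by rewrite -(cardsT {set T}) -powersetT card_powerset cardsT. Qed.

Lemma card_intersecting (F : {set {set T}}) :
  {in F &, forall A B, A :&: B != set0} -> #|F|.*2 <= 2 ^ #|T|.
Proof.
move=> F_int; rewrite -card_finset -addnn -{2}(card_imset F (@setC_inj T)).
have disjF : F :&: (@setC T @: F) = set0.
  apply/setP=> A; rewrite !inE; apply/negbTE/andP=> -[AF /imsetP [B BF defA]].
  by have := F_int _ _ AF BF; rewrite defA setIC setICr eqxx.
by rewrite -cardsUI disjF cards0 addn0 max_card.
Qed.

Lemma card_sets_containing (t : T) : #|[set A : {set T} | t \in A]|.*2 = 2 ^ #|T|.
Proof.
set F := [set A : {set T} | t \in A].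
have compF : @setC T @: F = ~: F.
  apply/setP=> A; rewrite !inE; apply/imsetP/idP => [[B] /[!inE] tB ->|tA].
    by rewrite inE negbK.
  by exists (~: A); rewrite ?setCK // !inE.
by rewrite -card_finset -(cardsC F) -compF card_imset ?addnn //; apply: setC_inj.
Qed.

End IntersectingFamilies.

Section BlowUp.
Variables (n : nat) (k : {set 'I_n} -> nat).
Hypothesis k_gt0 : forall x : {set 'I_n}, x != set0 -> x != setT -> 0 < k x.
Hypothesis n_gt1 : 1 < n.
Local Notation E := (BElt k).
Local Notation Z := (Zstar k).
Local Notation adj := (@Gc_adj n k).

Definition base (a : E) : {set 'I_n} := if a is Some (Some (x, _)) then x else set0.

Lemma small_neq_setT (x : {set 'I_n}) : #|x| < n -> x != setT.
Proof. by apply: contraTneq => ->; rewrite cardsT card_ord ltnn. Qed.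

Lemma kbound_gt0 : 0 < kbound k.
Proof.
have t : 'I_n by exists 0; apply: ltnW.
apply: leq_trans (leq_bigmax [set t]); apply: k_gt0.
  by apply/set0Pn; exists t; rewrite inE.
by apply: small_neq_setT; rewrite cards1.
Qed.

Definition chain_bot (x : {set 'I_n}) : E := Some (Some (x, Ordinal kbound_gt0)).

Lemma chain_bot_inj : injective chain_bot.
Proof. by move=> x y [->]. Qed.

Lemma chain_bot_LB x : x != set0 -> x != setT -> chain_bot x \in LB k.
Proof. by move=> x0 xT; rewrite inE /= x0 xT k_gt0. Qed.

Lemma ble_refl (a : E) : ble a a.
Proof. by case: a => [[[x i]|]|] //=; rewrite eqxx. Qed.

Lemma ble_chain_bot (z x : {set 'I_n}) (i : 'I_(kbound k)) :
  z \subset x -> ble (chain_bot z) (Some (Some (x, i))).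
Proof. by move=> zx /=; case: eqP => // /eqP; rewrite properEneq zx andbT. Qed.

Lemma ble_subset (z x : {set 'I_n}) (l i : 'I_(kbound k)) :
  ble (Some (Some (z, l)) : E) (Some (Some (x, i))) -> z \subset x.
Proof. by rewrite /=; case: eqP => [->|_ /proper_sub]. Qed.

Lemma meet0_inner (x y : {set 'I_n}) (i j : 'I_(kbound k)) : x != setT ->
  meet0 (Some (Some (x, i)) : E) (Some (Some (y, j))) = (x :&: y == set0).
Proof.
move=> xT; apply/idP/idP => [/forallP meet0xy|/eqP xy0].
  (* The least element of C_(x :&: y) is below both, even if x :&: y is x or y. *)
  apply/negPn/negP => xy0; have := meet0xy (chain_bot (x :&: y)).
  have xyT : x :&: y != setT.
    by apply: contraNneq xT; rewrite -subTset => <-; apply: subsetIl.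
  by rewrite chain_bot_LB // !ble_chain_bot ?subsetIl ?subsetIr.
apply/forallP=> -[[[z l]|]|]; apply/implyP; rewrite inE //= => /and3P [z0 _ _].
apply/implyP=> /andP [/ble_subset zx /ble_subset zy].
have : z \subset x :&: y by rewrite subsetI zx zy.
by rewrite xy0 subset0 (negbTE z0).
Qed.

Lemma ZstarP (a : E) : reflect
  (exists x i, [/\ a = Some (Some (x, i)), x != set0, x != setT & i < k x]) (a \in Z).
Proof.
apply: (iffP idP) => [|[x [i [-> x0 xT ik]]]].
  rewrite inE => /and3P [aLB a0 /existsP [b /and3P [bLB b0 /forallP /(_ b)]]].
  rewrite bLB ble_refl (negbTE b0) andbT implybF.
  case: a aLB a0 => [[[x i]|]|] //.
    by rewrite inE => /and3P [x0 xT ik] _ _; exists x, i.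
  by case: b {bLB b0} => [[[]|]|].
have cx0 : ~: x != set0.
  by apply: contraNneq xT => /(congr1 (@setC _)); rewrite setCK setC0 => ->.
have cxT : ~: x != setT.
  by apply: contraNneq x0 => /(congr1 (@setC _)); rewrite setCK setCT => ->.
rewrite !inE x0 xT ik /=; apply/existsP; exists (chain_bot (~: x)).
by rewrite chain_bot_LB // meet0_inner // setICr eqxx.
Qed.

Lemma chain_bot_Zstar x : x != set0 -> x != setT -> chain_bot x \in Z.
Proof.
by move=> x0 xT; apply/ZstarP; exists x, (Ordinal kbound_gt0); split=> //; apply: k_gt0.
Qed.

Lemma base_Zstar a : a \in Z -> (base a != set0) && (base a != setT).
Proof. by case/ZstarP=> x [i [-> x0 xT _]]; apply/andP. Qed.

Lemma Gc_adj_Zstar a b : a \in Z -> b \in Z ->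
  adj a b = (a != b) && (base a :&: base b != set0).
Proof.
case/ZstarP=> x [i [-> _ xT _]]; case/ZstarP=> y [j [-> _ _ _]].
by rewrite /Gc_adj meet0_inner.
Qed.

Lemma card_Zstar : 2 ^ n - 2 <= #|Z|.
Proof.
pose proper_sets := ~: [set set0; setT] : {set {set 'I_n}}.
have set0T : set0 != setT :> {set 'I_n}.
  by rewrite small_neq_setT // cards0; apply: ltnW.
have <- : #|proper_sets| = 2 ^ n - 2.
  by rewrite cardsCs setCK cards2 set0T card_finset card_ord.
rewrite -(card_imset _ chain_bot_inj); apply/subset_leq_card/subsetP=> a.
by case/imsetP=> x /[!(in_setC, in_set2)] /norP [x0 xT] ->; apply: chain_bot_Zstar.
Qed.

Definition filter_bots (t : 'I_n) : {set E} :=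
  chain_bot @: [set x : {set 'I_n} | (t \in x) && (x != setT)].

Lemma filter_bots_sub t : filter_bots t \subset Z.
Proof.
apply/subsetP=> _ /imsetP [x xF ->]; rewrite inE in xF; case/andP: xF => tx xT.
by apply: chain_bot_Zstar => //; apply/set0Pn; exists t.
Qed.

Lemma card_filter_bots t : #|filter_bots t| = 2 ^ n.-1 - 1.
Proof.
have cardF : #|[set x : {set 'I_n} | t \in x]| = 2 ^ n.-1.
  apply: double_inj; rewrite card_sets_containing card_ord -mul2n -expnS.
  by rewrite prednK //; apply: ltnW.
rewrite card_imset; last exact: chain_bot_inj.
rewrite -cardF [in RHS](cardsD1 setT) inE in_setT addKn.
by apply: eq_card=> x; rewrite !inE andbC.
Qed.

Lemma filter_bots_resolved (t : 'I_n) (x y : {set 'I_n}) :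
  t \in x -> t \in y -> x != setT -> y != setT -> ~~ (x \subset y) ->
  exists2 w, w \in Z :\: filter_bots t & strongly_resolves Z adj w (chain_bot x) (chain_bot y).
Proof.
move=> tx ty xT yT /subsetPn [i ix iy].
have ti : t != i by apply: contraNneq iy => <-.
have i0 : [set i] != set0 by apply/set0Pn; exists i; rewrite inE.
have iT : [set i] != setT by apply: small_neq_setT; rewrite cards1.
have x0 : x != set0 by apply/set0Pn; exists t.
have y0 : y != set0 by apply/set0Pn; exists t.
have xZ := chain_bot_Zstar x0 xT; have yZ := chain_bot_Zstar y0 yT.
have iZ := chain_bot_Zstar i0 iT.
exists (chain_bot [set i]).
  rewrite inE iZ andbT; apply/imsetP=> -[z /[!inE] /andP [tz _] /chain_bot_inj iz].
  by rewrite -iz inE in tz; rewrite (eqP tz) eqxx in ti.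
right; exists [:: chain_bot x; chain_bot [set i]]; split; last by rewrite !inE eqxx orbT.
apply: gshortest_pair; rewrite ?Gc_adj_Zstar // ?(inj_eq chain_bot_inj) /=.
- apply/andP; split; first by apply: contraNneq iy => ->.
  by apply/set0Pn; exists t; rewrite inE ty tx.
- apply/andP; split; first by apply: contraNneq ti => xi; move: tx; rewrite xi inE.
  by apply/set0Pn; exists i; rewrite !inE ix eqxx.
- by apply: contraNneq iy => ->; rewrite inE.
- rewrite negb_and !negbK; apply/orP; right; apply/eqP/setP=> j; rewrite !inE.
  by apply/negbTE/andP=> -[jy /eqP ji]; rewrite -ji jy in iy.
Qed.

Section Diameter.
Hypothesis n_gt2 : 2 < n.

Lemma Gc_common_neighbour a b : a \in Z -> b \in Z -> base a :&: base b = set0 ->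
  exists2 c, c \in Z & adj a c && adj c b.
Proof.
move=> aZ bZ ab0.
have /andP [/set0Pn [i ia] _] := base_Zstar aZ.
have /andP [/set0Pn [j jb] _] := base_Zstar bZ.
have disj l : l \in base a -> l \in base b -> False.
  by move=> la lb; have := in_setI l (base a) (base b); rewrite ab0 la lb inE.
have ij0 : [set i; j] != set0 by apply/set0Pn; exists i; rewrite !inE eqxx.
have ijT : [set i; j] != setT by apply: small_neq_setT; rewrite cards2; case: (i != j).
exists (chain_bot [set i; j]); first exact: chain_bot_Zstar.
rewrite !Gc_adj_Zstar ?chain_bot_Zstar // -andbA; apply/and4P; split.
- by apply/eqP=> ac; apply: (disj j _ jb); rewrite ac !inE eqxx orbT.
- by apply/set0Pn; exists i; rewrite !inE ia eqxx.
- by apply/eqP=> cb; apply: (disj i ia); rewrite -cb !inE eqxx.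
- by apply/set0Pn; exists j; rewrite !inE jb eqxx orbT.
Qed.

Lemma Gc_walk_le2 a b : a \in Z -> b \in Z -> exists2 q, gwalk Z adj a q b & size q <= 2.
Proof.
move=> aZ bZ; have [<-|ab] := eqVneq a b; first by exists [::]; first exact: gwalk_nil.
have [ab0|ab_meet] := eqVneq (base a :&: base b) set0.
  have [c cZ /andP [ac cb]] := Gc_common_neighbour aZ bZ ab0.
  exists [:: c; b] => //.
  by apply: (gwalk_cons aZ ac); apply: (gwalk_cons cZ cb); apply: gwalk_nil.
exists [:: b] => //; apply: (gwalk_cons aZ); last exact: gwalk_nil.
by rewrite Gc_adj_Zstar // ab.
Qed.

Lemma locally_farthest_Zstar a b : a \in Z -> b \in Z -> a != b ->
  base a = base b \/ base a :&: base b = set0 -> locally_farthest Z adj a b.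
Proof.
move=> aZ bZ ab [twin|disj] z q zZ bz abq.
  have q_gt0 : 0 < size q by case: q abq => // -[_ /= ab']; rewrite ab' eqxx in ab.
  have [<-|az] := eqVneq a z; first by exists [::]; first exact: gwalk_nil.
  exists [:: z] => //; apply: (gwalk_cons aZ); last exact: gwalk_nil.
  by move: bz; rewrite !Gc_adj_Zstar // twin az => /andP [].
have [q' aq'z le2] := Gc_walk_le2 aZ zZ; exists q' => //; apply: (leq_trans le2).
case: q abq => [[_ /= ab' _]|c [|d q]] //; first by rewrite ab' eqxx in ab.
by case/gwalk_consP=> _ + [_ /= cb _]; rewrite cb Gc_adj_Zstar // disj eqxx andbF.
Qed.

Lemma resolving_complement_intersecting W u v : strong_resolving_set Z adj W ->
  u \in Z :\: W -> v \in Z :\: W -> u != v ->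
  (base u != base v) && (base u :&: base v != set0).
Proof.
move=> [_ resW] /setDP [uZ uW] /setDP [vZ vW] uv.
apply/negPn/negP; rewrite negb_and !negbK => twin_or_disj.
have far_uv : locally_farthest Z adj u v.
  by apply: locally_farthest_Zstar => //; case/orP: twin_or_disj => /eqP; [left|right].
have far_vu : locally_farthest Z adj v u.
  apply: locally_farthest_Zstar; rewrite 1?eq_sym //.
  by case/orP: twin_or_disj => /eqP; rewrite setIC; [left|right].
have [w wW /(strongly_resolves_locally_farthest uv far_uv far_vu) [] eqw] := resW u v uZ vZ uv.
  by rewrite -eqw wW in uW.
by rewrite -eqw wW in vW.
Qed.

Lemma card_resolving_complement W : strong_resolving_set Z adj W -> #|Z :\: W| < 2 ^ n.-1.
Proof.
move=> resW; set I := Z :\: W.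
have base_I u : u \in I -> (base u != set0) && (base u != setT).
  by case/setDP=> /base_Zstar.
have base_inj : {in I &, injective base}.
  move=> u v uI vI; apply: contra_eq => uv.
  by have /andP [] := resolving_complement_intersecting resW uI vI uv.
have setT0 : [set: 'I_n] != set0 by rewrite -card_gt0 cardsT card_ord ltnW.
(* Adding [setT] keeps the family intersecting and sharpens the bound by one. *)
have F_int : {in setT |: base @: I &, forall x y, x :&: y != set0}.
  move=> x y /setU1P [-> | /imsetP [u uI ->]] /setU1P [-> | /imsetP [v vI ->]].
  - by rewrite setIT.
  - by rewrite setTI; case/andP: (base_I v vI).
  - by rewrite setIT; case/andP: (base_I u uI).
  have [<- | uv] := eqVneq u v; first by rewrite setIid; case/andP: (base_I u uI).
  by have /andP [] := resolving_complement_intersecting resW uI vI uv.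
have TnI : setT \notin base @: I.
  by apply/imsetP=> -[u /base_I /andP [_ /eqP uT] Tu]; rewrite Tu in uT.
have := card_intersecting F_int; rewrite cardsU1 TnI card_in_imset // card_ord.
rewrite -[in 2 ^ n](prednK (ltnW n_gt1)) expnS; lia.
Qed.

Lemma filter_bots_resolving t : strong_resolving_set Z adj (Z :\: filter_bots t).
Proof.
split=> [|u v uZ vZ uv]; first exact: subsetDl.
have [uW|uS] := boolP (u \in Z :\: filter_bots t).
  have [q vqu _] := Gc_walk_le2 vZ uZ.
  by exists u => //; apply: strongly_resolves_self vqu.
have [vW|vS] := boolP (v \in Z :\: filter_bots t).
  have [q uqv _] := Gc_walk_le2 uZ vZ.
  by exists v => //; apply: strongly_resolves_sym; apply: strongly_resolves_self uqv.
move: uS vS; rewrite !in_setD uZ vZ !andbT !negbK /filter_bots.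
move=> /imsetP [x xF eqxu] /imsetP [y yF eqyv]; subst u v.
rewrite inE in xF; rewrite inE in yF; case/andP: xF => tx xT; case/andP: yF => ty yT.
have [xy|/(filter_bots_resolved tx ty xT yT) //] := boolP (x \subset y).
have yx : ~~ (y \subset x).
  by apply: contraNN uv => yx; rewrite (inj_eq chain_bot_inj) eqEsubset xy.
by have [w wW /strongly_resolves_sym] := filter_bots_resolved ty tx yT xT yx; exists w.
Qed.

End Diameter.
End BlowUp.

Theorem theorem3p20 (n : nat) (k : {set 'I_n} -> nat) :
  3 <= n ->
  (forall x : {set 'I_n}, x != set0 -> x != setT -> 0 < k x) ->
  is_sdim (Zstar k) (@Gc_adj n k) (#|Zstar k| - 2 ^ n.-1 + 1).
Proof.
move=> n_gt2 k_gt0; have n_gt1 : 1 < n := ltnW n_gt2.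
have t : 'I_n := Ordinal (ltnW n_gt1).
have pow_n : 2 ^ n = 2 * 2 ^ n.-1 by rewrite -expnS prednK // ltnW.
have pow_ge2 : 2 <= 2 ^ n.-1 by rewrite -{1}(expn1 2) leq_exp2l //; lia.
have card_Z := card_Zstar k_gt0 n_gt1; rewrite pow_n in card_Z.
split.
- exists (Zstar k :\: filter_bots k_gt0 n_gt1 t).
  split; first exact: filter_bots_resolving.
  by rewrite cardsD (setIidPr (filter_bots_sub _ _ _)) card_filter_bots; lia.
- move=> W resW; have [WZ _] := resW.
  have := card_resolving_complement k_gt0 n_gt1 n_gt2 resW.
  by rewrite cardsD (setIidPr WZ); have := subset_leq_card WZ; lia.
Qed.
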